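(* Assume $g^\partial$ nondegenerate and define on $\widetilde{\mathcal F}_{PCH}=\Omega^1_{nd}(\partial M,\mathcal V^\partial)\times\mathcal A_{\iota^*P}$ the functions $\widetilde v(\omega,e)=-\phi_e^{-1}(p\,d_\omega e)\in\ker\mathsf W_e^{(1,2)}$ and $\widetilde\omega(\omega,e)=\omega+\widetilde v(\omega,e)$. Then $\widetilde\omega$ is invariant under $\omega\mapsto\omega+v$ for $v\in\ker\mathsf W_e^{(1,2)}$ (i.e. it is basic with respect to $\mathcal A_{\iota^*P}\to\mathcal A_{\iota^*P}^{red}$), $[\widetilde\omega]_e=[\omega]_e$, $p\,d_{\widetilde\omega}e=0$, and $d_{\widetilde\omega}e=0$ holds if and only if $e\wedge d_\omega e=0$.
   Context: Setting as follows. $\partial M$ is the boundary 3-manifold of a 4-manifold, $\mathcal V^\partial$ a rank-4 bundle with fibre Minkowski metric $\eta$, $\iota^*P$ the associated principal $SO(3,1)$-bundle with space of connections $\mathcal A_{\iota^*P}$; $\bigwedge^2\mathcal V^\partial\cong\mathfrak{so}(3,1)$ acts via $[\cdot,\cdot]$ (combined with wedge of forms); $d_\omega\phi=d\phi+[\omega,\phi]$. $\Omega^1_{nd}(\partial M,\mathcal V^\partial)$: 1-forms injective at each point; $g^\partial=e^*\eta$. $\mathsf W_e^{(i,j)}(X)=X\wedge e$ on $\Omega^i(\partial M,\bigwedge^j\mathcal V^\partial)$; $\mathcal W_{(i,j)}=\ker\mathsf W_e^{(i,j)}$ with chosen complements $\mathcal C_{(i,j)}$; $p$ denotes the projection onto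 $\mathcal W_{(2,1)}$ along $\mathcal C_{(2,1)}$. $\phi_e:=p\circ[\cdot,e]|_{\mathcal W_{(1,2)}}:\mathcal W_{(1,2)}\to\mathcal W_{(2,1)}$ (an isomorphism when $g^\partial$ is nondegenerate). $\mathcal A^{red}_{\iota^*P}=\mathcal A_{\iota^*P}/\!\sim$ with $\omega\sim\omega'$ iff $\omega-\omega'\in\ker\mathsf W^{(1,2)}_e$, and $[\omega]_e$ the class of $\omega$. *)

(* Pointwise (fibrewise) model of the bigraded algebra
   Omega^i(dM, Lambda^j V) at a point of the 3-dimensional boundary,
   with V = R^4 carrying the Minkowski metric eta = diag(-1,1,1,1). *)
From HB Require Import structures.
From mathcomp Require Import all_boot all_order all_algebra.
Set Implicit Arguments. Unset Strict Implicit. Unset Printing Implicit Defensive.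
Import Order.TTheory GRing.Theory Num.Theory.
Local Open Scope ring_scope.

Notation bform R := {ffun {set 'I_3} * {set 'I_4} -> R^o}.

Section Defs.
Variable R : realFieldType.

(* An element of  (Lambda (R^3)^* ) (x) (Lambda R^4): the coefficient of
   dx^S (x) e_T, for S a subset of {0,1,2} and T a subset of {0,..,3}. *)

Definition homog (i j : nat) (f : bform R) : Prop :=
  forall S T, f (S, T) != 0 -> #|S| = i /\ #|T| = j.

(* sign of the shuffle putting A followed by B in increasing order *)
Definition sgnsh (n : nat) (A B : {set 'I_n}) : R :=
  (-1) ^+ #|[set ij : 'I_n * 'I_n | [&& ij.1 \in A, ij.2 \in B & (ij.2 < ij.1)%N]]|.

(* wedge product of V-valued forms, with the Koszul convention
   (a (x) X) /\ (b (x) Y) = (-1)^{|X||b|} (a /\ b) (x) (X /\ Y) *)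
Definition wedge (f g : bform R) : bform R :=
  [ffun ST : {set 'I_3} * {set 'I_4} =>
     \sum_(A : {set 'I_3} | A \subset ST.1) \sum_(B : {set 'I_4} | B \subset ST.2)
       sgnsh A (ST.1 :\: A) * sgnsh B (ST.2 :\: B)
       * (-1) ^+ (#|B| * #|ST.1 :\: A|)
       * f (A, B) * g (ST.1 :\: A, ST.2 :\: B)].

Definition eta (j : 'I_4) : R := if j == ord0 then -1 else 1.

(* action of Lambda^2 V = so(3,1) on V:
   (e_a /\ e_b) . e_c = e_a eta(e_b,e_c) - e_b eta(e_a,e_c);
   act_coef X c d = coefficient of e_d in X . e_c for X a basis bivector *)
Definition act_coef (X : {set 'I_4}) (c d : 'I_4) : R :=
  \sum_(a : 'I_4) \sum_(b : 'I_4 | (a < b)%N && (X == [set a; b]))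
     ((d == a)%:R * (b == c)%:R * eta b - (d == b)%:R * (a == c)%:R * eta a).

(* [f, g] for f a Lambda^2 V-valued bform and g a V-valued bform
   (combined with the wedge of the bform parts); result is V-valued *)
Definition brk (f g : bform R) : bform R :=
  [ffun ST : {set 'I_3} * {set 'I_4} =>
     \sum_(d : 'I_4 | ST.2 == [set d])
     \sum_(A : {set 'I_3} | A \subset ST.1)
       sgnsh A (ST.1 :\: A) *
       \sum_(X : {set 'I_4} | #|X| == 2%N) \sum_(c : 'I_4)
          f (A, X) * g (ST.1 :\: A, [set c]) * act_coef X c d].

(* covariant derivative d_omega e = d e + [omega, e]; de is the value
   of the exterior derivative of e (in the chosen trivialization) *)
Definition dcov (de omega e : bform R) : bform R := de + brk omega e.

Definition inW (i j : nat) (e X : bform R) : Prop := homog i j X /\ wedge X e = 0.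

Definition emat (e : bform R) : 'M[R]_(3, 4) := \matrix_(i < 3, j < 4) e ([set i], [set j]).
Definition gmat (e : bform R) : 'M[R]_3 :=
  emat e *m diag_mx (\row_j eta j) *m (emat e)^T.

Definition same_class (e omega omega' : bform R) : Prop := inW 1 2 e (omega - omega').

End Defs.

(* The whole statement rests on two properties of the bracket [u |-> [u, e]]
   on ker W_e^(1,2).  First, it maps ker W_e^(1,2) into ker W_e^(2,1).
   Second, when g = e^* eta is nondegenerate it is injective there; the
   argument is the one proving uniqueness of the Levi-Civita connection.  Let
   B_i(x, y) = x^T eta u_i eta y, antisymmetric bilinear forms on V.  The
   Koszul formula turns [u, e] = 0 into B_i(e_j, e_k) = 0; u /\ e = 0 says that
   the Kulkarni-Nomizu product of c_il = B_i(e_l, n) with g vanishes, where n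
   is the normal of the frame e, hence c = 0; and e_0, e_1, e_2, n is a basis
   of V.  Together with the projection p being linear and the identity on
   W_(2,1), this makes phi_e = p o [., e] injective, so
   vt (w + v) = vt w - v; the remaining claims then follow since
   e /\ Y = Y /\ e for Y in Omega^2(V). *)

From Pilot Require Import Defs.
From HB Require Import structures.
From mathcomp Require Import all_boot all_order all_algebra.
From mathcomp Require Import ring.
From Stdlib Require PeanoNat.
Set Implicit Arguments. Unset Strict Implicit. Unset Printing Implicit Defensive.
Import Order.TTheory GRing.Theory Num.Theory.
Local Open Scope ring_scope.

(** * Bit-mask coordinates *)

(* Index sets are also written as bit masks [bset3 K], [bset4 L]: on concrete
   masks every set operation reduces by [simpl], which is what lets [ring]
   check the coordinate identities below. *)
Definition bset3 (k : nat) : {set 'I_3} := [set i : 'I_3 | Nat.testbit k i].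
Definition bset4 (k : nat) : {set 'I_4} := [set i : 'I_4 | Nat.testbit k i].

Definition i3_0 := @Ordinal 3 0 isT.
Definition i3_1 := @Ordinal 3 1 isT.
Definition i3_2 := @Ordinal 3 2 isT.
Definition i4_0 := @Ordinal 4 0 isT.
Definition i4_1 := @Ordinal 4 1 isT.
Definition i4_2 := @Ordinal 4 2 isT.
Definition i4_3 := @Ordinal 4 3 isT.

Definition bits3f (P : nat -> bool) : nat :=
  Nat.add (Nat.add (if P 0%N then 1%N else 0%N) (if P 1%N then 2%N else 0%N))
    (if P 2%N then 4%N else 0%N).
Definition bits4f (P : nat -> bool) : nat :=
  Nat.add (Nat.add (Nat.add (if P 0%N then 1%N else 0%N) (if P 1%N then 2%N else 0%N))
    (if P 2%N then 4%N else 0%N)) (if P 3%N then 8%N else 0%N).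
Definition count3 (P : nat -> bool) : nat :=
  Nat.add (Nat.add (nat_of_bool (P 0%N)) (nat_of_bool (P 1%N))) (nat_of_bool (P 2%N)).
Definition count4 (P : nat -> bool) : nat :=
  Nat.add (Nat.add (Nat.add (nat_of_bool (P 0%N)) (nat_of_bool (P 1%N)))
    (nat_of_bool (P 2%N))) (nat_of_bool (P 3%N)).

Definition bits3 (X : {set 'I_3}) : nat :=
  Nat.add (Nat.add (if i3_0 \in X then 1 else 0) (if i3_1 \in X then 2 else 0))
    (if i3_2 \in X then 4 else 0).
Definition bits4 (X : {set 'I_4}) : nat :=
  Nat.add (Nat.add (Nat.add (if i4_0 \in X then 1 else 0) (if i4_1 \in X then 2 else 0))
    (if i4_2 \in X then 4 else 0)) (if i4_3 \in X then 8 else 0).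

Lemma bits3K X : bset3 (bits3 X) = X.
Proof.
apply/setP => -[[|[|[|//]]] Hi]; rewrite inE /bits3;
[have -> : Ordinal Hi = i3_0 by apply/val_inj
|have -> : Ordinal Hi = i3_1 by apply/val_inj
|have -> : Ordinal Hi = i3_2 by apply/val_inj];
by case: (i3_0 \in X); case: (i3_1 \in X); case: (i3_2 \in X).
Qed.

Lemma bits4K X : bset4 (bits4 X) = X.
Proof.
apply/setP => -[[|[|[|[|//]]]] Hi]; rewrite inE /bits4;
[have -> : Ordinal Hi = i4_0 by apply/val_inj
|have -> : Ordinal Hi = i4_1 by apply/val_inj
|have -> : Ordinal Hi = i4_2 by apply/val_inj
|have -> : Ordinal Hi = i4_3 by apply/val_inj];
by case: (i4_0 \in X); case: (i4_1 \in X); case: (i4_2 \in X); case: (i4_3 \in X).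
Qed.

Lemma bits3_lt8 S : (bits3 S < 8)%N.
Proof. by rewrite /bits3; case: (_ \in S); case: (_ \in S); case: (_ \in S). Qed.
Lemma bits4_lt16 T : (bits4 T < 16)%N.
Proof. by rewrite /bits4; case: (_ \in T); case: (_ \in T); case: (_ \in T); case: (_ \in T). Qed.

Lemma eq_ord_eqb n (x y : 'I_n) : (x == y) = Nat.eqb x y.
Proof. by apply/eqP/PeanoNat.Nat.eqb_spec => [->//|E]; apply/val_inj. Qed.
Lemma ltn_ltb (x y : nat) : (x < y)%N = Nat.ltb x y.
Proof.
by apply/idP/idP => [/ssrnat.ltP/PeanoNat.Nat.ltb_lt|/PeanoNat.Nat.ltb_lt/ssrnat.ltP].
Qed.

Lemma bits3E (X : {set 'I_3}) (P : nat -> bool) :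
  (forall z : 'I_3, (z \in X) = P z) -> bits3 X = bits3f P.
Proof. by move=> H; rewrite /bits3 /bits3f !H. Qed.
Lemma bits4E (X : {set 'I_4}) (P : nat -> bool) :
  (forall z : 'I_4, (z \in X) = P z) -> bits4 X = bits4f P.
Proof. by move=> H; rewrite /bits4 /bits4f !H. Qed.

Lemma sum_ord3 (V : nmodType) (F : 'I_3 -> V) : \sum_(x < 3) F x = F i3_0 + F i3_1 + F i3_2.
Proof.
rewrite !big_ord_recr big_ord0 /= add0r.
by congr (F _ + F _ + F _); apply/val_inj.
Qed.
Lemma sum_ord4 (V : nmodType) (F : 'I_4 -> V) :
  \sum_(x < 4) F x = F i4_0 + F i4_1 + F i4_2 + F i4_3.
Proof.
rewrite !big_ord_recr big_ord0 /= add0r.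
by congr (F _ + F _ + F _ + F _); apply/val_inj.
Qed.
Lemma sum_pairs_ord4 (V : nmodType) (F : 'I_4 -> 'I_4 -> V) :
  \sum_(a < 4) \sum_(b < 4) (if (a < b)%N then F a b else 0) =
  F i4_0 i4_1 + F i4_0 i4_2 + F i4_0 i4_3 + F i4_1 i4_2 + F i4_1 i4_3 + F i4_2 i4_3.
Proof. by rewrite !sum_ord4 /= !add0r !addr0 !addrA. Qed.

Lemma card_set3E (P : pred 'I_3) : #|[set z | P z]| = Nat.add (Nat.add (P i3_0) (P i3_1)) (P i3_2).
Proof.
rewrite -sum1_card big_mkcond /= (sum_ord3 (V := nat)) !inE /=.
by case: (P i3_0); case: (P i3_1); case: (P i3_2).
Qed.
Lemma card_set4E (P : pred 'I_4) :
  #|[set z | P z]| = Nat.add (Nat.add (Nat.add (P i4_0) (P i4_1)) (P i4_2)) (P i4_3).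
Proof.
rewrite -sum1_card big_mkcond /= (sum_ord4 (V := nat)) !inE /=.
by case: (P i4_0); case: (P i4_1); case: (P i4_2); case: (P i4_3).
Qed.

Lemma card_set3_count (P : pred 'I_3) (Q : nat -> bool) :
  (forall z : 'I_3, P z = Q z) -> #|[set z | P z]| = count3 Q.
Proof. by move=> H; rewrite card_set3E /count3 !H. Qed.
Lemma card_set4_count (P : pred 'I_4) (Q : nat -> bool) :
  (forall z : 'I_4, P z = Q z) -> #|[set z | P z]| = count4 Q.
Proof. by move=> H; rewrite card_set4E /count4 !H. Qed.

Lemma card_bits3 (S : {set 'I_3}) : #|S| = count3 (Nat.testbit (bits3 S)).
Proof.
transitivity #|[set z | z \in S]|; first by apply: eq_card => z; rewrite inE.
rewrite card_set3E /count3 /bits3.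
by case: (i3_0 \in S); case: (i3_1 \in S); case: (i3_2 \in S).
Qed.
Lemma card_bits4 (T : {set 'I_4}) : #|T| = count4 (Nat.testbit (bits4 T)).
Proof.
transitivity #|[set z | z \in T]|; first by apply: eq_card => z; rewrite inE.
rewrite card_set4E /count4 /bits4.
by case: (i4_0 \in T); case: (i4_1 \in T); case: (i4_2 \in T); case: (i4_3 \in T).
Qed.

Lemma setDD1 (T : finType) (S : {set T}) x : x \in S -> S :\: (S :\ x) = [set x].
Proof. by move=> xS; rewrite setDDr setDv set0U (setIidPr _) // sub1set. Qed.

Lemma card_subD (T : finType) (S A : {set T}) : A \subset S -> #|S| = (#|A| + #|S :\: A|)%N.
Proof. by move=> sAS; rewrite -(cardsID A S) (setIidPr sAS). Qed.

Lemma card_gt_setD1 n (S : {set 'I_n}) x :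
  #|[set z in S :\ x | (x < z)%N]| = #|[set z in S | (x < z)%N]|.
Proof. by apply: eq_card => z; rewrite !inE; case: eqP => [->|]; rewrite ?ltnn ?andbF. Qed.

Lemma card_lt_setD1 n (S : {set 'I_n}) x :
  #|[set z in S :\ x | (z < x)%N]| = #|[set z in S | (z < x)%N]|.
Proof. by apply: eq_card => z; rewrite !inE; case: eqP => [->|]; rewrite ?ltnn ?andbF. Qed.

Section SubsetSums.
Variables (V : nmodType) (n : nat) (S : {set 'I_n}) (F : {set 'I_n} -> V).

Lemma sum_subset_card1 : (forall A : {set 'I_n}, #|A| != 1%N -> F A = 0) ->
  \sum_(A : {set 'I_n} | A \subset S) F A = \sum_(x < n) (if x \in S then F [set x] else 0).
Proof.
move=> HF; rewrite -big_mkcond /=.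
rewrite (bigID (fun A : {set 'I_n} => #|A| == 1%N)) /= [X in _ + X]big1 ?addr0; last first.
  by move=> A /andP[_ /HF].
rewrite -(big_imset F (h := fun x => [set x])) /=; last by move=> x y _ _ /set1_inj.
apply: eq_bigl => A; apply/andP/imsetP.
- case=> sAS /cards1P[x Ex]; exists x; last by []. by rewrite -sub1set -Ex.
- by case=> x xS ->; rewrite sub1set cards1.
Qed.

Lemma sum_subset_cocard1 :
  (forall A : {set 'I_n}, A \subset S -> #|S :\: A| != 1%N -> F A = 0) ->
  \sum_(A : {set 'I_n} | A \subset S) F A = \sum_(x < n) (if x \in S then F (S :\ x) else 0).
Proof.
move=> HF; rewrite -big_mkcond /=.
rewrite (bigID (fun A : {set 'I_n} => #|S :\: A| == 1%N)) /= [X in _ + X]big1 ?addr0; last first.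
  by move=> A /andP[sAS /HF]; apply.
rewrite -(big_imset F (h := fun x => S :\ x)) /=; last first.
  move=> x y xS yS Exy; apply/eqP; apply: contraT => nxy.
  have : x \in S :\ y by rewrite !inE xS andbT; apply: contraNneq nxy => ->.
  by rewrite -Exy !inE eqxx.
apply: eq_bigl => A; apply/andP/imsetP.
- case=> sAS /cards1P[x Ex].
  have xSA : x \in S :\: A by rewrite Ex set11.
  exists x; first by move: xSA; rewrite inE => /andP[].
  by rewrite -Ex setDDr setDv set0U (setIidPr sAS).
- case=> x xS ->; rewrite subsetDl; split=> //.
  by rewrite setDD1 ?cards1.
Qed.

End SubsetSums.

(** * Coordinate formulas for the wedge product and the bracket *)

Section Coordinates.
Variable R : realFieldType.
Implicit Types (f g : bform R) (S : {set 'I_3}) (T : {set 'I_4}).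

Lemma sgnsh_set1r n (A : {set 'I_n}) x :
  sgnsh R A [set x] = (-1) ^+ #|[set z in A | (x < z)%N]|.
Proof.
rewrite /sgnsh; congr (_ ^+ _).
transitivity #|[set (z, x) | z in [set z in A | (x < z)%N]]|; last first.
  by apply: card_imset => ? ? [].
apply: eq_card => -[z w]; rewrite inE /=.
apply/andP/imsetP => [[zA /andP[/set1P -> xz]]|[z' ]].
  by exists z => //; rewrite inE zA.
by rewrite inE => /andP[z'A xz'] [-> ->]; rewrite z'A inE eqxx.
Qed.

Lemma sgnsh_set1l n (B : {set 'I_n}) x :
  sgnsh R [set x] B = (-1) ^+ #|[set z in B | (z < x)%N]|.
Proof.
rewrite /sgnsh; congr (_ ^+ _).
transitivity #|[set (x, z) | z in [set z in B | (z < x)%N]]|; last first.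
  by apply: card_imset => ? ? [].
apply: eq_card => -[z w]; rewrite inE /=.
apply/andP/imsetP => [[/set1P -> /andP[wB wx]]|[z' ]].
  by exists w => //; rewrite inE wB.
by rewrite inE => /andP[z'B xz'] [-> ->]; rewrite z'B inE eqxx.
Qed.

Lemma homog_coord0 i j f S T : homog i j f -> (#|S| != i) || (#|T| != j) -> f (S, T) = 0.
Proof. by move=> hf H; apply/eqP; apply: contraTT H => /hf [-> ->]; rewrite !eqxx. Qed.

Lemma wedge_homogE i j k l f g S T : homog i j f -> homog k l g ->
  wedge f g (S, T) = \sum_(A : {set 'I_3} | A \subset S) \sum_(B : {set 'I_4} | B \subset T)
    sgnsh R A (S :\: A) * sgnsh R B (T :\: B) * (-1) ^+ (j * k) * f (A, B) * g (S :\: A, T :\: B).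
Proof.
move=> hf hg; rewrite ffunE /=; apply: eq_bigr => A _; apply: eq_bigr => B _.
have [f0|/hf [_ ->]] := eqVneq (f (A, B)) 0; first by rewrite f0 !(mulr0, mul0r).
by have [g0|/hg [-> _]] := eqVneq (g (S :\: A, T :\: B)) 0; first by rewrite g0 !(mulr0, mul0r).
Qed.

Lemma wedge_coordr i j f g S T : homog i j f -> homog 1 1 g ->
  wedge f g (S, T) = \sum_(x < 3) (if x \in S then \sum_(y < 4) (if y \in T then
    (-1) ^+ (#|[set z in S | (x < z)%N]| + #|[set z in T | (y < z)%N]| + j)
    * f (S :\ x, T :\ y) * g ([set x], [set y]) else 0) else 0).
Proof.
move=> hf hg; rewrite (wedge_homogE _ _ hf hg) muln1.
rewrite sum_subset_cocard1; last first.
  move=> A _ HA; apply: big1 => B _; rewrite (homog_coord0 hg) ?mulr0 //.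
  by rewrite HA.
apply: eq_bigr => x _; case: ifP => // xS.
rewrite sum_subset_cocard1; last first.
  by move=> B _ HB; rewrite (homog_coord0 hg) ?mulr0 // HB orbT.
apply: eq_bigr => y _; case: ifP => // yT.
by rewrite !setDD1 // !sgnsh_set1r !card_gt_setD1 !exprD -!mulrA.
Qed.

Lemma wedge_coordl k l f g S T : homog 1 1 f -> homog k l g ->
  wedge f g (S, T) = \sum_(x < 3) (if x \in S then \sum_(y < 4) (if y \in T then
    (-1) ^+ (#|[set z in S | (z < x)%N]| + #|[set z in T | (z < y)%N]| + k)
    * f ([set x], [set y]) * g (S :\ x, T :\ y) else 0) else 0).
Proof.
move=> hf hg; rewrite (wedge_homogE _ _ hf hg) mul1n.
rewrite sum_subset_card1; last first.
  move=> A HA; apply: big1 => B _; rewrite (homog_coord0 hf) ?mulr0 ?mul0r //.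
  by rewrite HA.
apply: eq_bigr => x _; case: ifP => // xS.
rewrite sum_subset_card1; last first.
  by move=> B HB; rewrite (homog_coord0 hf) ?mulr0 ?mul0r // HB orbT.
apply: eq_bigr => y _; case: ifP => // yT.
by rewrite !sgnsh_set1l !card_lt_setD1 !exprD -!mulrA.
Qed.

Definition act_term (a b c d : 'I_4) : R :=
  (d == a)%:R * (b == c)%:R * Defs.eta R b - (d == b)%:R * (a == c)%:R * Defs.eta R a.

Lemma brk_coord_pairs f g S (d : 'I_4) : homog 1 2 f ->
  brk f g (S, [set d]) = \sum_(x < 3) (if x \in S then sgnsh R [set x] (S :\: [set x]) *
    \sum_(a < 4) \sum_(b < 4) (if (a < b)%N then \sum_(c < 4)
      f ([set x], [set a; b]) * g (S :\: [set x], [set c]) * act_term a b c d else 0) else 0).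
Proof.
move=> hf; rewrite ffunE /=.
rewrite (big_pred1 d) => [|d']; last by rewrite (inj_eq set1_inj) eq_sym.
rewrite sum_subset_card1; last first.
  move=> A HA; rewrite big1 ?mulr0 // => X _; apply: big1 => c _.
  by rewrite (homog_coord0 hf) ?mul0r // HA.
apply: eq_bigr => x _; case: ifP => // _; congr (_ * _).
transitivity (\sum_(X : {set 'I_4} | #|X| == 2%N) \sum_(c < 4) \sum_(a < 4) \sum_(b < 4)
   (if (a < b)%N then (if X == [set a; b] then
     f ([set x], [set a; b]) * g (S :\: [set x], [set c]) * act_term a b c d else 0) else 0)).
  apply: eq_bigr => X _; apply: eq_bigr => c _.
  rewrite /act_coef big_distrr /=; apply: eq_bigr => a _.
  rewrite big_distrr /= big_mkcond /=; apply: eq_bigr => b _.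
  case ab: (a < b)%N => //=.
  by case: eqP => [->|_] /=; rewrite /act_term.
rewrite exchange_big /=.
under eq_bigr => c _ do (rewrite exchange_big /=; under eq_bigr => a _ do rewrite exchange_big /=).
rewrite exchange_big /=.
under eq_bigr => a _ do rewrite exchange_big /=.
apply: eq_bigr => a _; apply: eq_bigr => b _.
case: ifP => ab; last by rewrite big1 // => c _; rewrite big1.
apply: eq_bigr => c _.
rewrite (bigD1 [set a; b]) /=; last by rewrite cards2 neq_ltn ab.
by rewrite eqxx big1 ?addr0 // => X /andP[_ /negbTE ->].
Qed.

Lemma brk_coord f g S (d : 'I_4) : homog 1 2 f ->
  brk f g (S, [set d]) = \sum_(x < 3) (if x \in S then (-1) ^+ #|[set z in S | (z < x)%N]| *
    \sum_(a < 4) \sum_(b < 4) (if (a < b)%N then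
      f ([set x], [set a; b]) *
      ((d == a)%:R * Defs.eta R b * g (S :\ x, [set b])
       - (d == b)%:R * Defs.eta R a * g (S :\ x, [set a])) else 0) else 0).
Proof.
move=> hf; rewrite brk_coord_pairs //; apply: eq_bigr => x _.
case: ifP => // xS; rewrite sgnsh_set1l card_lt_setD1; congr (_ * _).
apply: eq_bigr => a _; apply: eq_bigr => b _; case: ifP => // ab.
rewrite (bigD1 a) //= (bigD1 b) //=; last by rewrite neq_ltn ab orbT.
rewrite big1 ?addr0; last first.
  move=> c /andP[cb ca]; rewrite /act_term.
  by rewrite (eq_sym b c) (negbTE ca) (eq_sym a c) (negbTE cb) /=; ring.
have nab : (a == b) = false by apply/negbTE; rewrite neq_ltn ab.
have nba : (b == a) = false by rewrite eq_sym.
by rewrite /act_term !eqxx nab nba /= ?mulr0n ?mulr1n; ring.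
Qed.

End Coordinates.

Lemma bset3_bits3f (X : {set 'I_3}) (P : nat -> bool) :
  (forall z : 'I_3, (z \in X) = P z) -> X = bset3 (bits3f P).
Proof. by move=> H; rewrite -(bits3E H) bits3K. Qed.
Lemma bset4_bits4f (X : {set 'I_4}) (P : nat -> bool) :
  (forall z : 'I_4, (z \in X) = P z) -> X = bset4 (bits4f P).
Proof. by move=> H; rewrite -(bits4E H) bits4K. Qed.

Section BitCoordinates.
Variable R : realFieldType.
Implicit Types (f g : bform R).

Definition eta_nat (a : nat) : R := if Nat.eqb a 0 then -1 else 1.

Lemma wedge_bitsr i j f g K L : homog i j f -> homog 1 1 g ->
  wedge f g (bset3 K, bset4 L) = \sum_(x < 3) (if Nat.testbit K x then
    \sum_(y < 4) (if Nat.testbit L y then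
    (-1) ^+ (count3 (fun z => Nat.testbit K z && Nat.ltb x z)
             + count4 (fun z => Nat.testbit L z && Nat.ltb y z) + j)
    * f (bset3 (bits3f (fun z => ~~ Nat.eqb z x && Nat.testbit K z)),
         bset4 (bits4f (fun z => ~~ Nat.eqb z y && Nat.testbit L z)))
    * g (bset3 (bits3f (fun z => Nat.eqb z x)), bset4 (bits4f (fun z => Nat.eqb z y)))
    else 0) else 0).
Proof.
move=> hf hg; rewrite (wedge_coordr _ _ hf hg); apply: eq_bigr => x _.
rewrite inE; case: ifP => // _; apply: eq_bigr => y _; rewrite inE; case: ifP => // _.
rewrite (@card_set3_count _ (fun z => Nat.testbit K z && Nat.ltb x z)); last first.
  by move=> z; rewrite inE ltn_ltb.
rewrite (@card_set4_count _ (fun z => Nat.testbit L z && Nat.ltb y z)); last first.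
  by move=> z; rewrite inE ltn_ltb.
rewrite (@bset3_bits3f (bset3 K :\ x) (fun z => ~~ Nat.eqb z x && Nat.testbit K z)); last first.
  by move=> z; rewrite !inE eq_ord_eqb.
rewrite (@bset4_bits4f (bset4 L :\ y) (fun z => ~~ Nat.eqb z y && Nat.testbit L z)); last first.
  by move=> z; rewrite !inE eq_ord_eqb.
rewrite (@bset3_bits3f [set x] (fun z => Nat.eqb z x)); last by move=> z; rewrite !inE eq_ord_eqb.
by rewrite (@bset4_bits4f [set y] (fun z => Nat.eqb z y)) // => z; rewrite !inE eq_ord_eqb.
Qed.

Lemma wedge_bitsl k l f g K L : homog 1 1 f -> homog k l g ->
  wedge f g (bset3 K, bset4 L) = \sum_(x < 3) (if Nat.testbit K x then
    \sum_(y < 4) (if Nat.testbit L y then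
    (-1) ^+ (count3 (fun z => Nat.testbit K z && Nat.ltb z x)
             + count4 (fun z => Nat.testbit L z && Nat.ltb z y) + k)
    * f (bset3 (bits3f (fun z => Nat.eqb z x)), bset4 (bits4f (fun z => Nat.eqb z y)))
    * g (bset3 (bits3f (fun z => ~~ Nat.eqb z x && Nat.testbit K z)),
         bset4 (bits4f (fun z => ~~ Nat.eqb z y && Nat.testbit L z)))
    else 0) else 0).
Proof.
move=> hf hg; rewrite (wedge_coordl _ _ hf hg); apply: eq_bigr => x _.
rewrite inE; case: ifP => // _; apply: eq_bigr => y _; rewrite inE; case: ifP => // _.
rewrite (@card_set3_count _ (fun z => Nat.testbit K z && Nat.ltb z x)); last first.
  by move=> z; rewrite inE ltn_ltb.
rewrite (@card_set4_count _ (fun z => Nat.testbit L z && Nat.ltb z y)); last first.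
  by move=> z; rewrite inE ltn_ltb.
rewrite (@bset3_bits3f (bset3 K :\ x) (fun z => ~~ Nat.eqb z x && Nat.testbit K z)); last first.
  by move=> z; rewrite !inE eq_ord_eqb.
rewrite (@bset4_bits4f (bset4 L :\ y) (fun z => ~~ Nat.eqb z y && Nat.testbit L z)); last first.
  by move=> z; rewrite !inE eq_ord_eqb.
rewrite (@bset3_bits3f [set x] (fun z => Nat.eqb z x)); last by move=> z; rewrite !inE eq_ord_eqb.
by rewrite (@bset4_bits4f [set y] (fun z => Nat.eqb z y)) // => z; rewrite !inE eq_ord_eqb.
Qed.

Definition brk_bits f g K (d : 'I_4) : R :=
  \sum_(x < 3) (if Nat.testbit K x then
    (-1) ^+ count3 (fun z => Nat.testbit K z && Nat.ltb z x) *
    \sum_(a < 4) \sum_(b < 4) (if (a < b)%N then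
      f (bset3 (bits3f (fun z => Nat.eqb z x)),
         bset4 (bits4f (fun z => Nat.eqb z a || Nat.eqb z b))) *
      ((nat_of_bool (Nat.eqb d a))%:R * eta_nat b
         * g (bset3 (bits3f (fun z => ~~ Nat.eqb z x && Nat.testbit K z)),
              bset4 (bits4f (fun z => Nat.eqb z b)))
       - (nat_of_bool (Nat.eqb d b))%:R * eta_nat a
         * g (bset3 (bits3f (fun z => ~~ Nat.eqb z x && Nat.testbit K z)),
              bset4 (bits4f (fun z => Nat.eqb z a)))) else 0) else 0).

Lemma brk_bitsE f g K (d : 'I_4) : homog 1 2 f ->
  brk f g (bset3 K, bset4 (bits4f (fun z => Nat.eqb z d))) = brk_bits f g K d.
Proof.
move=> hf; rewrite -(@bset4_bits4f [set d]); last by move=> z; rewrite !inE eq_ord_eqb.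
rewrite brk_coord //; apply: eq_bigr => x _.
rewrite inE; case: ifP => // _.
rewrite (@card_set3_count _ (fun z => Nat.testbit K z && Nat.ltb z x)); last first.
  by move=> z; rewrite inE ltn_ltb.
congr (_ * _); apply: eq_bigr => a _; apply: eq_bigr => b _; case: ifP => // _.
rewrite (@bset3_bits3f (bset3 K :\ x) (fun z => ~~ Nat.eqb z x && Nat.testbit K z)); last first.
  by move=> z; rewrite !inE eq_ord_eqb.
rewrite (@bset3_bits3f [set x] (fun z => Nat.eqb z x)); last by move=> z; rewrite !inE eq_ord_eqb.
rewrite (@bset4_bits4f [set a; b] (fun z => Nat.eqb z a || Nat.eqb z b)); last first.
  by move=> z; rewrite !inE !eq_ord_eqb.
rewrite (@bset4_bits4f [set a] (fun z => Nat.eqb z a)); last by move=> z; rewrite !inE eq_ord_eqb.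
rewrite (@bset4_bits4f [set b] (fun z => Nat.eqb z b)); last by move=> z; rewrite !inE eq_ord_eqb.
have eta_natE (c : 'I_4) : Defs.eta R c = eta_nat c by rewrite /eta_nat /Defs.eta eq_ord_eqb.
by rewrite !eq_ord_eqb !eta_natE.
Qed.

End BitCoordinates.

Section Algebra.
Variable R : realFieldType.
Implicit Types (f g : bform R).

Lemma homogD i j f g : homog i j f -> homog i j g -> homog i j (f + g).
Proof.
move=> hf hg S T; rewrite ffunE.
by have [f0|/hf//] := eqVneq (f (S, T)) 0; rewrite f0 add0r => /hg.
Qed.
Lemma homogN i j f : homog i j f -> homog i j (- f).
Proof. by move=> hf S T; rewrite ffunE oppr_eq0 => /hf. Qed.
Lemma homogB i j f g : homog i j f -> homog i j g -> homog i j (f - g).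
Proof. by move=> hf hg; apply: homogD => //; apply: homogN. Qed.
Lemma homog0 i j : homog i j (0 : bform R).
Proof. by move=> S T; rewrite ffunE eqxx. Qed.

Lemma wedgeDl f f' g : wedge (f + f') g = wedge f g + wedge f' g.
Proof.
apply/ffunP => ST; rewrite !ffunE -big_split /=; apply: eq_bigr => A _.
by rewrite -big_split /=; apply: eq_bigr => B _; rewrite ffunE mulrDr mulrDl.
Qed.
Lemma wedgeNl f g : wedge (- f) g = - wedge f g.
Proof.
apply/ffunP => ST; rewrite !ffunE -sumrN; apply: eq_bigr => A _.
by rewrite -sumrN; apply: eq_bigr => B _; rewrite ffunE mulrN mulNr.
Qed.
Lemma wedgeNr f g : wedge f (- g) = - wedge f g.
Proof.
apply/ffunP => ST; rewrite !ffunE -sumrN; apply: eq_bigr => A _.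
by rewrite -sumrN; apply: eq_bigr => B _; rewrite ffunE mulrN.
Qed.
Lemma wedge0l g : wedge 0 g = 0.
Proof.
apply/ffunP => ST; rewrite !ffunE; apply: big1 => A _; apply: big1 => B _.
by rewrite ffunE !(mulr0, mul0r).
Qed.

Lemma brkDl f f' g : brk (f + f') g = brk f g + brk f' g.
Proof.
apply/ffunP => ST; rewrite !ffunE -big_split /=; apply: eq_bigr => d _.
rewrite -big_split /=; apply: eq_bigr => A _; rewrite -mulrDr; congr (_ * _).
rewrite -big_split /=; apply: eq_bigr => X _.
by rewrite -big_split /=; apply: eq_bigr => c _; rewrite ffunE !mulrDl.
Qed.
Lemma brkNl f g : brk (- f) g = - brk f g.
Proof.
apply/ffunP => ST; rewrite !ffunE -sumrN; apply: eq_bigr => d _.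
rewrite -sumrN; apply: eq_bigr => A _; rewrite -mulrN; congr (_ * _).
rewrite -sumrN; apply: eq_bigr => X _.
by rewrite -sumrN; apply: eq_bigr => c _; rewrite ffunE !mulNr.
Qed.

Lemma dcovD (de w v e : bform R) : dcov de (w + v) e = dcov de w e + brk v e.
Proof. by rewrite /dcov brkDl addrA. Qed.

Lemma wedge_homog i j k l f g : homog i j f -> homog k l g ->
  homog (i + k) (j + l) (wedge f g).
Proof.
move=> hf hg S T Hne.
suff /andP[/eqP -> /eqP ->] : (#|S| == (i + k)%N) && (#|T| == (j + l)%N) by [].
apply: contraNT Hne => H; rewrite ffunE.
apply/eqP; apply: big1 => A sAS; apply: big1 => B sBT.
have [f0|/hf [cA cB]] := eqVneq (f (A, B)) 0; first by rewrite f0 !(mulr0, mul0r).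
have [g0|/hg [cA' cB']] := eqVneq (g (S :\: A, T :\: B)) 0; first by rewrite g0 !(mulr0, mul0r).
by case/negP: H; rewrite (card_subD sAS) (card_subD sBT) cA cB cA' cB' !eqxx.
Qed.

Lemma brk_homog f g : homog 1 2 f -> homog 1 1 g -> homog 2 1 (brk f g).
Proof.
move=> hf hg S T Hne.
suff /andP[/eqP -> /eqP ->] : (#|S| == 2%N) && (#|T| == 1%N) by [].
apply: contraNT Hne => H; rewrite ffunE.
apply/eqP; apply: big1 => d /eqP /= Td; apply: big1 => A sAS.
rewrite big1 ?mulr0 // => X _; apply: big1 => c _.
have [f0|/hf [cA _]] := eqVneq (f (A, X)) 0; first by rewrite f0 !(mulr0, mul0r).
have [g0|/hg [cA' _]] := eqVneq (g (S :\: A, [set c])) 0; first by rewrite g0 !(mulr0, mul0r).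
by case/negP: H; rewrite (card_subD sAS) cA cA' Td cards1 !eqxx.
Qed.

Lemma inWD i j (e f g : bform R) : inW i j e f -> inW i j e g -> inW i j e (f + g).
Proof. by case=> hf wf [hg wg]; split; [exact: homogD | rewrite wedgeDl wf wg addr0]. Qed.
Lemma inWN i j (e f : bform R) : inW i j e f -> inW i j e (- f).
Proof. by case=> hf wf; split; [exact: homogN | rewrite wedgeNl wf oppr0]. Qed.
Lemma inWB i j (e f g : bform R) : inW i j e f -> inW i j e g -> inW i j e (f - g).
Proof. by move=> hf hg; apply: inWD => //; apply: inWN. Qed.
Lemma inW0 i j (e : bform R) : inW i j e 0.
Proof. by split; [exact: homog0 | rewrite wedge0l]. Qed.

Lemma bform_eq0_bits i j f : homog i j f ->
  (forall K L, (K < 8)%N -> (L < 16)%N -> count3 (Nat.testbit K) = i ->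
     count4 (Nat.testbit L) = j -> f (bset3 K, bset4 L) = 0) -> f = 0.
Proof.
move=> hf H; apply/ffunP => -[S T]; rewrite ffunE.
have [//|/hf [cS cT]] := eqVneq (f (S, T)) 0.
by rewrite -(bits3K S) -(bits4K T) H ?bits3_lt8 ?bits4_lt16 // -?card_bits3 -?card_bits4.
Qed.

End Algebra.

(* Reduces [f = 0] to one goal per coordinate of the right bidegree,
   with concrete masks [K] and [L]. *)
Ltac bits_coords hf :=
  apply: (bform_eq0_bits hf); rewrite /count3 /count4;
  intros K L hK hL;
  destruct K as [|[|[|[|[|[|[|[|K]]]]]]]]; try (by move: hK);
  destruct L as [|[|[|[|[|[|[|[|[|[|[|[|[|[|[|[|L]]]]]]]]]]]]]]]]; try (by move: hL);
  simpl; intros cK cL; try discriminate.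

Lemma wedgeC11_21 (R : realFieldType) (e f : bform R) : homog 1 1 e -> homog 2 1 f ->
  wedge e f = wedge f e.
Proof.
move=> he hf; apply/eqP; rewrite -subr_eq0; apply/eqP.
have hef := homogB (wedge_homog he hf) (wedge_homog hf he).
bits_coords hef; rewrite ffunE (wedge_bitsl _ _ he hf) ffunE (wedge_bitsr _ _ hf he).
all: rewrite !sum_ord3 !sum_ord4 /=; ring.
Qed.

(** * The bracket maps ker W_e^(1,2) into ker W_e^(2,1) *)

Section BracketPreservesKernel.
Variables (R : realFieldType) (u e : bform R).
Hypotheses (hu : homog 1 2 u) (he : homog 1 1 e).

Local Notation ecf K L := (e (bset3 K, bset4 L)).
Local Notation wcf K L := (wedge u e (bset3 K, bset4 L)).

Let hbrk : homog 2 1 (brk u e) := brk_homog hu he.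

Local Ltac expand_wedge_brk :=
  rewrite (wedge_bitsr _ _ hbrk he) !(wedge_bitsr _ _ hu he) !sum_ord3 !sum_ord4 /=;
  rewrite /bits3f /bits4f /count3 /count4 /=;
  rewrite ?(brk_bitsE _ _ i4_0 hu) ?(brk_bitsE _ _ i4_1 hu) ?(brk_bitsE _ _ i4_2 hu)
    ?(brk_bitsE _ _ i4_3 hu) /brk_bits !sum_ord3 !sum_pairs_ord4 /=;
  rewrite /bits3f /bits4f /count3 /count4 /eta_nat /=; ring.

(* Every coordinate of [u, e] /\ e is an e-weighted combination of
   coordinates of u /\ e. *)
Lemma wedge_brk_coord3 : wedge (brk u e) e (bset3 7, bset4 3) =
    - ecf 4 4 * wcf 3 7 - ecf 4 8 * wcf 3 11
    + ecf 2 4 * wcf 5 7 + ecf 2 8 * wcf 5 11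
    - ecf 1 4 * wcf 6 7 - ecf 1 8 * wcf 6 11.
Proof. by expand_wedge_brk. Qed.

Lemma wedge_brk_coord5 : wedge (brk u e) e (bset3 7, bset4 5) =
    ecf 4 2 * wcf 3 7 - ecf 4 8 * wcf 3 13
    - ecf 2 2 * wcf 5 7 + ecf 2 8 * wcf 5 13
    + ecf 1 2 * wcf 6 7 - ecf 1 8 * wcf 6 13.
Proof. by expand_wedge_brk. Qed.

Lemma wedge_brk_coord6 : wedge (brk u e) e (bset3 7, bset4 6) =
    ecf 4 1 * wcf 3 7 - ecf 4 8 * wcf 3 14
    - ecf 2 1 * wcf 5 7 + ecf 2 8 * wcf 5 14
    + ecf 1 1 * wcf 6 7 - ecf 1 8 * wcf 6 14.
Proof. by expand_wedge_brk. Qed.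

Lemma wedge_brk_coord9 : wedge (brk u e) e (bset3 7, bset4 9) =
    ecf 4 2 * wcf 3 11 + ecf 4 4 * wcf 3 13
    - ecf 2 2 * wcf 5 11 - ecf 2 4 * wcf 5 13
    + ecf 1 2 * wcf 6 11 + ecf 1 4 * wcf 6 13.
Proof. by expand_wedge_brk. Qed.

Lemma wedge_brk_coord10 : wedge (brk u e) e (bset3 7, bset4 10) =
    ecf 4 1 * wcf 3 11 + ecf 4 4 * wcf 3 14
    - ecf 2 1 * wcf 5 11 - ecf 2 4 * wcf 5 14
    + ecf 1 1 * wcf 6 11 + ecf 1 4 * wcf 6 14.
Proof. by expand_wedge_brk. Qed.

Lemma wedge_brk_coord12 : wedge (brk u e) e (bset3 7, bset4 12) =
    ecf 4 1 * wcf 3 13 - ecf 4 2 * wcf 3 14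
    - ecf 2 1 * wcf 5 13 + ecf 2 2 * wcf 5 14
    + ecf 1 1 * wcf 6 13 - ecf 1 2 * wcf 6 14.
Proof. by expand_wedge_brk. Qed.

Lemma wedge_brk_eq0 : wedge u e = 0 -> wedge (brk u e) e = 0.
Proof.
move=> ue0; have wcf0 K L : wcf K L = 0 by rewrite ue0 ffunE.
bits_coords (wedge_homog hbrk he).
- by rewrite wedge_brk_coord3 !wcf0; ring.
- by rewrite wedge_brk_coord5 !wcf0; ring.
- by rewrite wedge_brk_coord6 !wcf0; ring.
- by rewrite wedge_brk_coord9 !wcf0; ring.
- by rewrite wedge_brk_coord10 !wcf0; ring.
- by rewrite wedge_brk_coord12 !wcf0; ring.
Qed.

End BracketPreservesKernel.

Lemma brk_inW (R : realFieldType) (e u : bform R) : homog 1 1 e ->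
  inW 1 2 e u -> inW 2 1 e (brk u e).
Proof. by move=> he [hu ue0]; split; [exact: brk_homog | exact: wedge_brk_eq0]. Qed.

(** * Injectivity of the bracket on ker W_e^(1,2) *)

(* Components of [e] and [u] as functions of nat indices (form index < 3,
   fibre index < 4); [bit i] is the mask of the singleton {i}. *)
Definition bit (i : nat) : nat := match i with 0 => 1 | 1 => 2 | 2 => 4 | _ => 8 end.
Definition mod3 (k : nat) : nat :=
  match k with 0 => 0 | 1 => 1 | 2 => 2 | 3 => 0 | 4 => 1 | _ => 2 end.
Definition skip_at (a k : nat) : nat := if Nat.ltb k a then k else S k.

Section Frame.
Variable R : realFieldType.

Definition sum3 (F : nat -> R) := F 0%N + F 1%N + F 2%N.
Definition sum4 (F : nat -> R) := F 0%N + F 1%N + F 2%N + F 3%N.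
Definition det3 (m : nat -> nat -> R) : R :=
    m 0%N 0%N * (m 1%N 1%N * m 2%N 2%N - m 1%N 2%N * m 2%N 1%N)
  - m 0%N 1%N * (m 1%N 0%N * m 2%N 2%N - m 1%N 2%N * m 2%N 0%N)
  + m 0%N 2%N * (m 1%N 0%N * m 2%N 1%N - m 1%N 1%N * m 2%N 0%N).
Definition adj3 (m : nat -> nat -> R) (i j : nat) : R :=
    m (mod3 (j + 1)) (mod3 (i + 1)) * m (mod3 (j + 2)) (mod3 (i + 2))
  - m (mod3 (j + 1)) (mod3 (i + 2)) * m (mod3 (j + 2)) (mod3 (i + 1)).

Variables (u e : bform R).

Definition ecoef (i a : nat) : R := e (bset3 (bit i), bset4 (bit a)).
Definition ucoef (i a b : nat) : R :=
  if Nat.ltb a b then u (bset3 (bit i), bset4 (Nat.add (bit a) (bit b)))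
  else if Nat.ltb b a then - u (bset3 (bit i), bset4 (Nat.add (bit a) (bit b))) else 0.
Definition uform (i : nat) (x y : nat -> R) : R :=
  sum4 (fun a => sum4 (fun b => x a * eta_nat R a * ucoef i a b * eta_nat R b * y b)).
Definition eta_e (j : nat) (x : nat -> R) : R := sum4 (fun a => eta_nat R a * ecoef j a * x a).
Definition gcoef (i j : nat) : R := eta_e i (ecoef j).
Definition gdet : R := det3 gcoef.

(* [cofac] is the generalised cross product of the rows of [e]; [normal] is
   the vector it defines through [eta], orthogonal to every [ecoef j]. *)
Definition cofac (a : nat) : R :=
  (if Nat.odd a then -1 else 1) * det3 (fun i k => ecoef i (skip_at a k)).
Definition normal (a : nat) : R := eta_nat R a * cofac a.
Definition frame_coef (a j : nat) : R := sum3 (fun k => adj3 gcoef j k * ecoef k a * eta_nat R a).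

Definition brk_coef (i j d : nat) : R :=
  sum4 (fun c => eta_nat R c * (ucoef i d c * ecoef j c - ucoef j d c * ecoef i c)).
Definition brk_eta (x y k : nat) : R := sum4 (fun d => eta_nat R d * ecoef k d * brk_coef x y d).
Definition minor_row (x y : nat -> R) (r a : nat) : R :=
  match r with 0 => eta_nat R a * x a | 1 => eta_nat R a * y a | _ => cofac a end.
Definition wedge_minor (S : nat) (x y : nat -> R) : R :=
  sum4 (fun t => wedge u e (bset3 S, bset4 (Nat.sub 15 (bit t)))
                 * det3 (fun r s => minor_row x y r (skip_at t s))).

Definition delta (a : nat) : nat -> R := fun x => if Nat.eqb a x then 1 else 0.

End Frame.

Definition kn_prod (R : realFieldType) (c g : nat -> nat -> R) (i j k l : nat) : R :=
  c i l * g j k - c i k * g j l - c j l * g i k + c j k * g i l.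

(* Contracting [kn_prod c g = 0] with the adjugate of [g] gives
   [det g * c + tau * g = 0] with [tau] a trace of [c]; a second
   contraction gives [4 det g * tau = 0]. *)
Lemma eq0_of_kn_prod_eq0 (R : realFieldType) (c g : nat -> nat -> R) :
  (forall i j, g i j = g j i) ->
  (forall i j k l, (i < j)%N -> (j < 3)%N -> (k < 3)%N -> (l < 3)%N -> kn_prod c g i j k l = 0) ->
  det3 g != 0 -> forall i j, (i < 3)%N -> (j < 3)%N -> c i j = 0.
Proof.
move=> gC H dn.
have HR i j k l : (i < 3)%N -> (j < 3)%N -> (k < 3)%N -> (l < 3)%N -> kn_prod c g i j k l = 0.
  move=> hi hj hk hl; case: (ltngtP i j) => [ij|ji|<-]; first exact: H.
    transitivity (- kn_prod c g j i k l); first by rewrite /kn_prod; ring.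
    by rewrite H // oppr0.
  by rewrite /kn_prod; ring.
pose tau := sum3 (fun j => sum3 (fun k => adj3 g j k * c j k)).
have E i l : (i < 3)%N -> (l < 3)%N -> det3 g * c i l + tau * g i l = 0.
  move=> hi hl.
  transitivity (sum3 (fun j => sum3 (fun k => adj3 g j k * kn_prod c g i j k l))); last first.
    by rewrite /sum3 !HR // !mulr0 !addr0.
  case: i hi => [|[|[|//]]] _; case: l hl => [|[|[|//]]] _;
  rewrite /tau /kn_prod /sum3 /adj3 /mod3 /det3 /=;
  rewrite ?(gC 1%N 0%N) ?(gC 2%N 0%N) ?(gC 2%N 1%N); ring.
have tau0 : tau = 0.
  have : 4%:R * det3 g * tau = 0.
    transitivity (sum3 (fun i => sum3 (fun l => adj3 g l i * (det3 g * c i l + tau * g i l)))).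
      rewrite /tau /sum3 /adj3 /mod3 /det3 /=.
      rewrite ?(gC 1%N 0%N) ?(gC 2%N 0%N) ?(gC 2%N 1%N); ring.
    by rewrite /sum3 !E // !mulr0 !addr0.
  by move/eqP; rewrite !mulf_eq0 (negbTE dn) pnatr_eq0 orbF => /eqP.
move=> i j hi hj; have /eqP := E i j hi hj; rewrite tau0 mul0r addr0.
by rewrite mulf_eq0 (negbTE dn) => /eqP.
Qed.

Ltac unfold_frame := rewrite /brk_eta /brk_coef /gdet /frame_coef /gcoef /eta_e /minor_row /uform
  /normal /cofac /det3 /sum3 /adj3 /mod3 /ucoef /ecoef /sum4 /eta_nat /skip_at /=.

Section FrameIdentities.
Variables (R : realFieldType) (u e : bform R).
Hypotheses (hu : homog 1 2 u) (he : homog 1 1 e).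

Lemma uform_eql i (x x' y : nat -> R) :
  (forall t, (t < 4)%N -> x t = x' t) -> uform u i x y = uform u i x' y.
Proof. by move=> H; rewrite /uform /sum4 !H. Qed.
Lemma uform_eqr i (x y y' : nat -> R) :
  (forall t, (t < 4)%N -> y t = y' t) -> uform u i x y = uform u i x y'.
Proof. by move=> H; rewrite /uform /sum4 !H. Qed.

Lemma uformZl i (c : R) (x y : nat -> R) : uform u i (fun t => c * x t) y = c * uform u i x y.
Proof. by rewrite /uform /sum4; ring. Qed.
Lemma uformZr i (c : R) (x y : nat -> R) : uform u i x (fun t => c * y t) = c * uform u i x y.
Proof. by rewrite /uform /sum4; ring. Qed.

Lemma uform_framel i (k : nat -> R) (m : R) (n y : nat -> R) :
  uform u i (fun x => sum3 (fun j => k j * ecoef e j x) - m * n x) y =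
  sum3 (fun j => k j * uform u i (ecoef e j) y) - m * uform u i n y.
Proof. by rewrite /uform /sum3 /sum4; ring. Qed.
Lemma uform_framer i (k : nat -> R) (m : R) (n x : nat -> R) :
  uform u i x (fun y => sum3 (fun j => k j * ecoef e j y) - m * n y) =
  sum3 (fun j => k j * uform u i x (ecoef e j)) - m * uform u i x n.
Proof. by rewrite /uform /sum3 /sum4; ring. Qed.

Lemma uform_anti i (x y : nat -> R) : uform u i x y = - uform u i y x.
Proof. by rewrite /uform /sum4 /ucoef /=; ring. Qed.

Lemma uform_delta i a b : (a < 4)%N -> (b < 4)%N ->
  uform u i (delta R a) (delta R b) = eta_nat R a * ucoef u i a b * eta_nat R b.
Proof.
case: a => [|[|[|[|//]]]] _; case: b => [|[|[|[|//]]]] _;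
  by rewrite /uform /delta /sum4 /ucoef /=; ring.
Qed.

(* Cramer's rule for the frame [ecoef e 0, ecoef e 1, ecoef e 2, normal e]. *)
Lemma delta_frame_expansion a x : (a < 4)%N -> (x < 4)%N ->
  gdet e * delta R a x = sum3 (fun j => frame_coef e a j * ecoef e j x) - cofac e a * normal e x.
Proof.
by case: a => [|[|[|[|//]]]] _; case: x => [|[|[|[|//]]]] _; rewrite /delta; unfold_frame; ring.
Qed.

(* The Koszul formula, as for the uniqueness of the Levi-Civita connection. *)
Lemma uform_frame_brk i j k : (i < 3)%N -> (j < 3)%N -> (k < 3)%N ->
  2%:R * uform u i (ecoef e j) (ecoef e k) =
    brk_eta u e i k j - brk_eta u e i j k + brk_eta u e j k i.
Proof.
by case: i => [|[|[|//]]] _; case: j => [|[|[|//]]] _; case: k => [|[|[|//]]] _; unfold_frame; ring.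
Qed.

Lemma brk_coefE i j d : (i < j)%N -> (j < 3)%N -> (d < 4)%N ->
  brk u e (bset3 (Nat.add (bit i) (bit j)), bset4 (bit d)) = brk_coef u e i j d.
Proof.
case: i => [|[|[|//]]]; case: j => [|[|[|//]]] //= _ _; case: d => [|[|[|[|//]]]] _;
rewrite ?(brk_bitsE _ _ i4_0 hu) ?(brk_bitsE _ _ i4_1 hu) ?(brk_bitsE _ _ i4_2 hu)
  ?(brk_bitsE _ _ i4_3 hu) /brk_bits !sum_ord3 !sum_pairs_ord4 /=;
rewrite /bits3f /bits4f /count3 /count4 /=; unfold_frame; ring.
Qed.

Lemma wedge_minorE i j (x y : nat -> R) : (i < j)%N -> (j < 3)%N ->
  wedge_minor u e (Nat.add (bit i) (bit j)) x y =
    uform u i y (normal e) * eta_e e j x - uform u i x (normal e) * eta_e e j y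
  - uform u j y (normal e) * eta_e e i x + uform u j x (normal e) * eta_e e i y.
Proof.
case: i => [|[|[|//]]]; case: j => [|[|[|//]]] //= _ _;
rewrite /wedge_minor /sum4 /= !(wedge_bitsr _ _ hu he) !sum_ord3 !sum_ord4 /=;
rewrite /bits3f /bits4f /count3 /count4 /=; unfold_frame; ring.
Qed.

End FrameIdentities.

Section Injectivity.
Variables (R : realFieldType) (u e : bform R).
Hypotheses (hu : homog 1 2 u) (he : homog 1 1 e).

Lemma uform_frame0 : brk u e = 0 -> forall i j k, (i < 3)%N -> (j < 3)%N -> (k < 3)%N ->
  uform u i (ecoef e j) (ecoef e k) = 0.
Proof.
move=> ue0 i j k hi hj hk.
have brk_coef0 x y d : (x < 3)%N -> (y < 3)%N -> (d < 4)%N -> brk_coef u e x y d = 0.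
  move=> hx hy hd; case: (ltngtP x y) => [xy|yx|<-].
  - by rewrite -(brk_coefE e hu) // ue0 ffunE.
  - transitivity (- brk_coef u e y x d); first by rewrite /brk_coef /sum4; ring.
    by rewrite -(brk_coefE e hu) // ue0 ffunE oppr0.
  - by rewrite /brk_coef /sum4; ring.
have brk_eta0 x y l : (x < 3)%N -> (y < 3)%N -> brk_eta u e x y l = 0.
  by move=> hx hy; rewrite /brk_eta /sum4 !brk_coef0 // !mulr0 !addr0.
have /eqP := uform_frame_brk u e hi hj hk.
by rewrite !brk_eta0 // subrr add0r mulf_eq0 pnatr_eq0 => /eqP.
Qed.

Lemma uform_normal0 : wedge u e = 0 -> gdet e != 0 -> forall i l, (i < 3)%N -> (l < 3)%N ->
  uform u i (ecoef e l) (normal e) = 0.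
Proof.
move=> ue0 dn; apply: (@eq0_of_kn_prod_eq0 R _ (gcoef e)) => //.
  by move=> i j; rewrite /gcoef /eta_e /sum4; ring.
move=> i j k l ij j3 _ _.
have := wedge_minorE hu he (ecoef e k) (ecoef e l) ij j3.
by rewrite /wedge_minor /sum4 ue0 !ffunE !mul0r !addr0 => /esym.
Qed.

Lemma uform_delta0 : wedge u e = 0 -> brk u e = 0 -> gdet e != 0 ->
  forall i a b, (i < 3)%N -> (a < 4)%N -> (b < 4)%N -> uform u i (delta R a) (delta R b) = 0.
Proof.
move=> wue0 bue0 dn i a b hi ha hb.
have frame0 := uform_frame0 bue0; have normal0 := uform_normal0 wue0 dn.
have normal_normal0 : uform u i (normal e) (normal e) = 0.
  have /eqP := uform_anti u i (normal e) (normal e).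
  by rewrite -subr_eq0 opprK -mulr2n mulrn_eq0 => /eqP.
have expandl c y : (c < 4)%N -> gdet e * uform u i (delta R c) y =
    sum3 (fun j => frame_coef e c j * uform u i (ecoef e j) y) - cofac e c * uform u i (normal e) y.
  move=> hc; rewrite -uformZl -uform_framel.
  by apply: uform_eql => t ht; exact: delta_frame_expansion.
have delta_frame0 c k : (c < 4)%N -> (k < 3)%N -> uform u i (delta R c) (ecoef e k) = 0.
  move=> hc hk; have /eqP := expandl c (ecoef e k) hc.
  rewrite /sum3 !frame0 // (uform_anti u i (normal e)) normal0 // oppr0 !mulr0 !addr0 subrr.
  by rewrite mulf_eq0 (negbTE dn) => /eqP.
have delta_normal0 c : (c < 4)%N -> uform u i (delta R c) (normal e) = 0.
  move=> hc; have /eqP := expandl c (normal e) hc.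
  rewrite /sum3 !normal0 // normal_normal0 !mulr0 !addr0 subrr.
  by rewrite mulf_eq0 (negbTE dn) => /eqP.
have /eqP : gdet e * uform u i (delta R a) (delta R b) = 0.
  rewrite -uformZr (@uform_eqr R u i _ _
    (fun y => sum3 (fun j => frame_coef e b j * ecoef e j y) - cofac e b * normal e y)).
    by rewrite uform_framer /sum3 !delta_frame0 // delta_normal0 // !mulr0 !addr0 subrr.
  by move=> t ht; exact: delta_frame_expansion.
by rewrite mulf_eq0 (negbTE dn) => /eqP.
Qed.

Definition first_bit (n : nat) : nat :=
  if Nat.testbit n 0 then 0 else if Nat.testbit n 1 then 1 else if Nat.testbit n 2 then 2 else 3.
Definition last_bit (n : nat) : nat :=
  if Nat.testbit n 3 then 3 else if Nat.testbit n 2 then 2 else if Nat.testbit n 1 then 1 else 0.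

Lemma kerW_brk_eq0 : wedge u e = 0 -> brk u e = 0 -> gdet e != 0 -> u = 0.
Proof.
move=> wue0 bue0 dn.
have eta_nat_neq0 c : eta_nat R c != 0.
  by rewrite /eta_nat; case: Nat.eqb; rewrite ?oppr_eq0 oner_eq0.
have ucoef0 i a b : (i < 3)%N -> (a < 4)%N -> (b < 4)%N -> ucoef u i a b = 0.
  move=> hi ha hb; have /eqP := uform_delta0 wue0 bue0 dn hi ha hb.
  by rewrite uform_delta // !mulf_eq0 !(negbTE (eta_nat_neq0 _)) orbF => /eqP.
bits_coords hu.
all: match goal with |- _ (bset3 ?K, bset4 ?L) = _ =>
  exact: (ucoef0 (first_bit K) (first_bit L) (last_bit L) isT isT isT) end.
Qed.

End Injectivity.

Lemma det_gmatE (R : realFieldType) (e : bform R) : \det (gmat e) = gdet e.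
Proof.
have set3E (i : 'I_3) : [set i] = bset3 (bit i).
  by apply/setP => z; rewrite !inE; case: i z => [[|[|[|//]]] ?] [[|[|[|//]]] ?].
have set4E (a : 'I_4) : [set a] = bset4 (bit a).
  by apply/setP => z; rewrite !inE; case: a z => [[|[|[|[|//]]]] ?] [[|[|[|[|//]]]] ?].
have -> : gmat e = \matrix_(i < 3, j < 3) gcoef e i j.
  apply/matrixP => i j; rewrite /gmat mul_mx_diag !mxE sum_ord4 !mxE !set3E !set4E.
  by rewrite /gcoef /eta_e /ecoef /sum4 /eta_nat /Defs.eta /=; ring.
rewrite (expand_det_row _ ord0) !big_ord_recr big_ord0 /= /cofactor.
rewrite !(expand_det_row _ ord0) !big_ord_recr !big_ord0 /=.
by rewrite /cofactor /= !det_mx11 !mxE /= /gdet /det3; ring.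
Qed.

Lemma inW_brk_eq0 (R : realFieldType) (e u : bform R) :
  homog 1 1 e -> \det (gmat e) != 0 -> inW 1 2 e u -> brk u e = 0 -> u = 0.
Proof. by rewrite det_gmatE => he dn [hu wue0] bue0; exact: (kerW_brk_eq0 hu he). Qed.

(** * The corrected connection *)

Section Representative.
Variables (R : realFieldType) (e de : bform R) (C : bform R -> Prop).
Variables (p vt : bform R -> bform R).
Hypotheses (he : homog 1 1 e) (nondeg : \det (gmat e) != 0) (hde : homog 2 1 de).
Hypothesis CD : forall x y, C x -> C y -> C (x + y).
Hypothesis CZ : forall (a : R) x, C x -> C (a *: x).
Hypothesis C_W0 : forall x, C x -> inW 2 1 e x -> x = 0.
Hypothesis hp : forall x, homog 2 1 x -> inW 2 1 e (p x) /\ C (x - p x).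

Lemma CN x : C x -> C (- x).
Proof. by move=> Cx; rewrite -scaleN1r; exact: CZ. Qed.

Lemma proj_id x : homog 2 1 x -> inW 2 1 e x -> p x = x.
Proof.
move=> hx Wx; have [Wpx Cx] := hp hx.
by apply/esym/eqP; rewrite -subr_eq0; apply/eqP/C_W0 => //; exact: inWB.
Qed.

Lemma projD x y : homog 2 1 x -> homog 2 1 y -> p (x + y) = p x + p y.
Proof.
move=> hx hy; have [Wx Cx] := hp hx; have [Wy Cy] := hp hy.
have [Wxy Cxy] := hp (homogD hx hy).
apply/eqP; rewrite eq_sym -subr_eq0; apply/eqP/C_W0; last by apply: inWB => //; exact: inWD.
have -> : p x + p y - p (x + y) = (x + y - p (x + y)) - ((x - p x) + (y - p y)).
  by apply/esym; rewrite addrAC opprD addrACA !subKr.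
by apply/CD/CN/CD.
Qed.

Lemma projN x : homog 2 1 x -> p (- x) = - p x.
Proof.
move=> hx; have p0 : p 0 = 0 by apply: proj_id; [exact: homog0 | exact: inW0].
by apply/eqP; rewrite -addr_eq0 -projD ?addNr ?p0 //; exact: homogN.
Qed.

Hypothesis hvt : forall w, homog 1 2 w ->
  inW 1 2 e (vt w) /\ p (brk (vt w) e) = - p (dcov de w e).

Lemma dcov_homog w : homog 1 2 w -> homog 2 1 (dcov de w e).
Proof. by move=> hw; apply: homogD => //; exact: brk_homog. Qed.

Lemma proj_brk_inj u : inW 1 2 e u -> p (brk u e) = 0 -> u = 0.
Proof.
move=> Wu; have hbrk := brk_homog Wu.1 he.
by rewrite proj_id //; [exact: inW_brk_eq0 | exact: brk_inW].
Qed.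

Lemma vtD w v : homog 1 2 w -> inW 1 2 e v -> vt (w + v) = vt w - v.
Proof.
move=> hw Wv; have [Wa pa] := hvt (homogD hw Wv.1); have [Wb pb] := hvt hw.
have hb x : inW 1 2 e x -> homog 2 1 (brk x e) by case=> hx _; exact: brk_homog.
suff : vt (w + v) - vt w + v = 0 by move/eqP; rewrite -addrA addr_eq0 opprD opprK => /eqP.
apply: proj_brk_inj; first by apply: inWD => //; exact: inWB.
rewrite !brkDl brkNl (projD (homogD (hb _ Wa) (homogN (hb _ Wb))) (hb _ Wv)).
rewrite (projD (hb _ Wa) (homogN (hb _ Wb))) (projN (hb _ Wb)) pa pb dcovD.
rewrite (projD (dcov_homog hw) (hb _ Wv)).
by rewrite opprK opprD addrAC addrNK addNr.
Qed.

Lemma proj_dcov_wt w : homog 1 2 w -> p (dcov de (w + vt w) e) = 0.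
Proof.
move=> hw; have [[hv _] pv] := hvt hw.
by rewrite dcovD (projD (dcov_homog hw) (brk_homog hv he)) pv subrr.
Qed.

Lemma dcov_wt_eq0 w : homog 1 2 w ->
  dcov de (w + vt w) e = 0 <-> wedge e (dcov de w e) = 0.
Proof.
move=> hw; have [Wv pv] := hvt hw; have Wb := brk_inW he Wv.
have hD := dcov_homog hw; rewrite dcovD; split.
  move/eqP; rewrite addr_eq0 => /eqP ->.
  by rewrite wedgeNr wedgeC11_21 ?Wb.2 ?oppr0 //; exact: Wb.1.
move=> eD0; have WD : inW 2 1 e (dcov de w e) by split; rewrite // -wedgeC11_21.
rewrite -(proj_dcov_wt hw) dcovD proj_id //; last exact: inWD.
exact: homogD Wb.1.
Qed.

End Representative.

Unset Implicit Arguments.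
Theorem lemma4p12 (R : realFieldType) (e de : bform R)
    (C : bform R -> Prop) (p : bform R -> bform R) (vt : bform R -> bform R) :
  (* e in Omega^1_nd(dM, V) *)
  homog 1 1 e -> row_free (emat e) ->
  (* g^\partial = e^* eta nondegenerate *)
  \det (gmat e) != 0 ->
  (* d e in Omega^2(dM, V) *)
  homog 2 1 de ->
  (* C = C_(2,1): a linear complement of W_(2,1) in Omega^2(dM, V) *)
  (forall x, C x -> homog 2 1 x) ->
  C 0 -> (forall x y, C x -> C y -> C (x + y)) ->
  (forall (a : R) x, C x -> C (a *: x)) ->
  (forall x, C x -> inW 2 1 e x -> x = 0) ->
  (forall x, homog 2 1 x -> exists w c, inW 2 1 e w /\ C c /\ x = w + c) ->
  (* p = projection onto W_(2,1) along C_(2,1) *)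
  (forall x, homog 2 1 x -> inW 2 1 e (p x) /\ C (x - p x)) ->
  (* vt omega = - phi_e^{-1} (p d_omega e), phi_e = p o [., e] on W_(1,2) *)
  (forall omega, homog 1 2 omega ->
     inW 1 2 e (vt omega) /\ p (brk (vt omega) e) = - p (dcov de omega e)) ->
  let wt := fun omega => omega + vt omega in
  (forall omega v, homog 1 2 omega -> inW 1 2 e v -> wt (omega + v) = wt omega) /\
  (forall omega, homog 1 2 omega -> same_class e (wt omega) omega) /\
  (forall omega, homog 1 2 omega -> p (dcov de (wt omega) e) = 0) /\
  (forall omega, homog 1 2 omega ->
     (dcov de (wt omega) e = 0 <-> wedge e (dcov de omega e) = 0)).
Proof.
move=> he _ nondeg hde _ _ CD CZ C_W0 _ hp hvt wt.
have vt_shift := vtD he nondeg hde CD CZ C_W0 hp hvt.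
split; [|split; [|split]].
- by move=> w v hw Wv; rewrite /wt vt_shift // addrACA subrr addr0.
- by move=> w /hvt[Wvt _]; rewrite /same_class /wt addrC addKr.
- exact: proj_dcov_wt he hde CD CZ C_W0 hp hvt.
- exact: dcov_wt_eq0 he hde CD CZ C_W0 hp hvt.
Qed.
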